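(* Let $X$ be a finite connected vertex transitive graph and $D=\operatorname{diam}(X)$. Suppose that for some $\epsilon,c>0$ there exists a 3-caret of branch length $R=\epsilon D^c$ in $X$. Then $|X|>\epsilon' D^{1+c(\log_3 4-1)}$, where $\epsilon'=\tfrac12\epsilon^{\log_3 4-1}$.
   Context: A 3-caret of branch length $R$ in a graph (with graph metric $d$) is a triple $\gamma_1,\gamma_2,\gamma_3$ of geodesics from a vertex $v_0$ to vertices $v_1,v_2,v_3$ respectively, with $d(v_0,v_i)=R$ for $i=1,2,3$, such that for all $k_1,k_2,k_3$ and $i\neq j$, $d(\gamma_i(k_i),\gamma_j(k_j))\ge\max\{k_i,k_j\}$ (here $\gamma_i(k)$ is the vertex at distance $k$ from $v_0$ along $\gamma_i$). *)

From mathcomp Require Import all_boot all_order all_algebra all_fingroup.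
From mathcomp Require Import reals exp.
Set Implicit Arguments. Unset Strict Implicit. Unset Printing Implicit Defensive.

Section Graph.
Variables (T : finType) (e : rel T).

Fixpoint gball (n : nat) (x : T) : {set T} :=
  match n with
  | 0 => [set x]
  | n'.+1 => let B := gball n' x in B :|: [set y | [exists z in B, e z y]]
  end.

(* Graph metric: least n with y in the n-ball around x (walks of length <= #|T|
   suffice in a connected graph; the value #|T| is returned if unreachable). *)
Definition gdist (x y : T) : nat := find (fun n => y \in gball n x) (iota 0 #|T|).

Definition gconnected : Prop := forall x y : T, connect e x y.

Definition vertex_transitive : Prop :=
  forall x y : T, exists f : {perm T}, (forall u v, e (f u) (f v) = e u v) /\ f x = y.

Definition diam : nat := \max_(x : T) \max_(y : T) gdist x y.

Definition geodesic_from (v0 : T) (r : nat) (gam : nat -> T) : Prop :=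
  [/\ gam 0 = v0, (forall k, k < r -> e (gam k) (gam k.+1)) & gdist v0 (gam r) = r].

Definition caret3 (r : nat) : Prop :=
  exists (v0 : T) (gam : 'I_3 -> nat -> T),
    (forall i, geodesic_from v0 r (gam i)) /\
    (forall (i j : 'I_3) (ki kj : nat), i != j -> ki <= r -> kj <= r ->
        maxn ki kj <= gdist (gam i ki) (gam j kj)).
End Graph.

From mathcomp Require Import all_boot all_order all_algebra all_fingroup.
From mathcomp Require Import reals exp.
From mathcomp Require Import zify.
Import Order.TTheory GRing.Theory Num.Theory.
Set Implicit Arguments. Unset Strict Implicit. Unset Printing Implicit Defensive.

(* Put rho_j := (3^j - 1)/2 (caret_radius j), so that 2 rho_j + 1 = 3^j and
   rho_j + 3^j = rho_(j+1).
   If 3^j <= r, the ball of radius rho_j around the apex of the caret and the three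
   balls of radius rho_j around the points at distance 3^j on the branches are
   pairwise disjoint (their centres are 2 rho_j + 1 apart) and all lie in the ball of
   radius rho_(j+1) around the apex; by vertex transitivity all these balls have the
   same size, so balls of radius rho_k contain at least 4^k vertices as long as
   3^(k-1) <= r.  Packing disjoint such balls along a diameter gives
   |X| > D (4/3)^k, and choosing 3^(k-1) <= r < 3^k turns (4/3)^k into at least
   r^(log_3 4 - 1) = eps^(log_3 4 - 1) D^(c (log_3 4 - 1)). *)

Section GraphMetric.
Variables (T : finType) (e : rel T).

Lemma gballS n x y :
  (y \in gball e n.+1 x) = (y \in gball e n x) || [exists z in gball e n x, e z y].
Proof. by rewrite /= !inE. Qed.

Lemma gball0 x y : (y \in gball e 0 x) = (y == x).
Proof. by rewrite /= inE. Qed.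

Lemma gball_mono m n x : m <= n -> {subset gball e m x <= gball e n x}.
Proof.
move=> /subnK <-; elim: (n - m) => [//|k IHk] y /IHk y_in.
by rewrite addSn gballS y_in.
Qed.

Lemma gball_trans m n x y z :
  y \in gball e m x -> z \in gball e n y -> z \in gball e (m + n) x.
Proof.
move=> y_in; elim: n z => [|n IHn] z; first by rewrite gball0 addn0 => /eqP->.
rewrite gballS addnS gballS => /orP[/IHn->//|/existsP[w /andP[/IHn w_in ewz]]].
by apply/orP; right; apply/existsP; exists w; rewrite w_in.
Qed.

Lemma gball_edge x y : e x y -> y \in gball e 1 x.
Proof.
by move=> exy; rewrite gballS; apply/orP; right; apply/existsP; exists x; rewrite gball0 eqxx.
Qed.

Lemma path_gball x p : path e x p -> last x p \in gball e (size p) x.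
Proof.
elim: p x => [|z p IHp] x /=; first by rewrite gball0.
by move=> /andP[exz /IHp z_p]; have := gball_trans (gball_edge exz) z_p; rewrite add1n.
Qed.

Lemma walk_gball (gam : nat -> T) r :
  (forall k, k < r -> e (gam k) (gam k.+1)) ->
  forall k, k <= r -> gam k \in gball e k (gam 0).
Proof.
move=> walk; elim=> [|k IHk] kr; first by rewrite gball0.
by have := gball_trans (IHk (ltnW kr)) (gball_edge (walk k kr)); rewrite addn1.
Qed.

Hypothesis e_sym : symmetric e.

Lemma gball_sym n x y : y \in gball e n x -> x \in gball e n y.
Proof.
elim: n y => [|n IHn] y; first by rewrite !gball0 eq_sym.
rewrite gballS => /orP[/IHn /(gball_mono (leqnSn n))//|/existsP[z /andP[/IHn xz ezy]]].
by rewrite -add1n; apply: gball_trans xz; apply: gball_edge; rewrite e_sym.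
Qed.

Hypothesis e_conn : gconnected e.

Lemma gball_reach x y : exists2 k, k < #|T| & y \in gball e k x.
Proof.
have /connectP[p e_p ->] := e_conn x y.
have [q e_q uniq_q _] := shortenP e_p.
exists (size q); last exact: path_gball.
by have := max_card (mem (x :: q)); rewrite (card_uniqP uniq_q).
Qed.

Lemma gdist_le x y k : (gdist e x y <= k) = (y \in gball e k x).
Proof.
have [k0 k0_lt y_in] := gball_reach x y.
have has_y : has (fun n => y \in gball e n x) (iota 0 #|T|).
  by apply/hasP; exists k0; rewrite ?mem_iota.
have d_lt : gdist e x y < #|T| by move: has_y; rewrite has_find size_iota.
apply/idP/idP => [d_le|y_ink].
  by apply: (gball_mono d_le); have := nth_find 0 has_y; rewrite nth_iota.
rewrite leqNgt; apply/negP => k_lt.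
by have := before_find 0 k_lt; rewrite nth_iota ?add0n ?y_ink // (ltn_trans k_lt).
Qed.

Lemma gdist_gball x y : y \in gball e (gdist e x y) x.
Proof. by rewrite -gdist_le. Qed.

Lemma gdistC x y : gdist e x y = gdist e y x.
Proof. by apply/eqP; rewrite eqn_leq !gdist_le; apply/andP; split; apply/gball_sym/gdist_gball. Qed.

Lemma gdist_triangle x y z : gdist e x z <= gdist e x y + gdist e y z.
Proof. by rewrite gdist_le; apply: gball_trans (gdist_gball x y) (gdist_gball y z). Qed.

Lemma gdist_edge x y : e x y -> gdist e x y <= 1.
Proof. by move=> exy; rewrite gdist_le gball_edge. Qed.

Lemma gdist_attained x y t : t <= gdist e x y -> exists z, gdist e x z = t.
Proof.
suff reach n w : gdist e x w = n -> t <= n -> exists z, gdist e x z = t.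
  by move=> t_le; apply: reach erefl t_le.
elim: n w => [|n IHn] w d_xw t_le.
  by exists w; move: t_le; rewrite d_xw leqn0 => /eqP.
have [t_lt|t_eq] : t <= n \/ t = n.+1 by lia.
  have := gdist_gball x w; rewrite d_xw gballS => /orP[|/existsP[z /andP[z_in ezw]]].
    by rewrite -gdist_le d_xw ltnn.
  apply: (IHn z) t_lt; apply/eqP; rewrite eqn_leq gdist_le z_in -ltnS.
  by have := gdist_triangle x z w; have := gdist_edge ezw; rewrite d_xw; lia.
by exists w; rewrite d_xw t_eq.
Qed.

Lemma disjoint_gball m x y : 2 * m < gdist e x y -> [disjoint gball e m x & gball e m y].
Proof.
move=> far; apply/pred0P => z /=; apply/negP => /andP[z_x z_y].
have : gdist e x y <= m + m by rewrite gdist_le (gball_trans z_x (gball_sym z_y)).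
by rewrite addnn -mul2n leqNgt far.
Qed.

End GraphMetric.

Lemma card_bigcup_disjoint (T : finType) (F : nat -> {set T}) n :
  (forall i j, i < j < n -> [disjoint F i & F j]) ->
  #|\bigcup_(i < n) F i| = \sum_(i < n) #|F i|.
Proof.
elim: n => [|n IHn] disjF; first by rewrite !big_ord0 cards0.
rewrite !big_ord_recr /= cardsU.
have -> : (\bigcup_(i < n) F i) :&: F n = set0.
  apply: disjoint_setI0; rewrite disjoint_sym; apply: bigcup_disjoint => i _.
  by rewrite disjoint_sym disjF // ltn_ord leqnn.
by rewrite cards0 subn0 IHn // => i j /andP[ij jn]; rewrite disjF // ij ltnW.
Qed.

Section VertexTransitive.
Variables (T : finType) (e : rel T).

Lemma gball_perm (f : {perm T}) : (forall u v, e (f u) (f v) = e u v) ->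
  forall n x y, (f y \in gball e n (f x)) = (y \in gball e n x).
Proof.
move=> f_auto; elim=> [|n IHn] x y; first by rewrite !gball0 (inj_eq perm_inj).
rewrite !gballS IHn; congr (_ || _).
apply/existsP/existsP => -[z /andP[z_in ez]].
  by exists (f^-1 z)%g; rewrite -IHn -f_auto permKV z_in.
by exists (f z); rewrite IHn z_in f_auto.
Qed.

Hypothesis e_trans : vertex_transitive e.

Lemma card_gball_transitive n x y : #|gball e n x| = #|gball e n y|.
Proof.
have [f [f_auto <-]] := e_trans x y; symmetry.
rewrite -(card_preimset _ (@perm_inj _ f)); apply: eq_card => z.
by rewrite inE gball_perm.
Qed.

Hypotheses (e_sym : symmetric e) (e_conn : gconnected e).

Lemma card_gball_packing m x y :
  (gdist e x y %/ (2 * m + 1)).+1 * #|gball e m x| <= #|T|.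
Proof.
set s := 2 * m + 1; set q := gdist e x y %/ s.
have at_dist i : i <= q -> exists z, gdist e x z = i * s.
  move=> iq; apply: (gdist_attained e_conn (y := y)).
  by apply: leq_trans (leq_divM _ s); rewrite leq_mul2r iq orbT.
pose P i := odflt x [pick z | gdist e x z == i * s].
have P_dist i : i <= q -> gdist e x (P i) = i * s.
  move=> /at_dist[z dz]; rewrite /P; case: pickP => [z' /eqP //|none].
  by have := none z; rewrite dz eqxx.
have disjP i j : i < j < q.+1 -> [disjoint gball e m (P i) & gball e m (P j)].
  move=> /andP[ij jq]; apply: disjoint_gball => //.
  have [iq jq'] : i <= q /\ j <= q by lia.
  by have := gdist_triangle e_conn x (P i) (P j); rewrite !P_dist //; nia.
have := card_bigcup_disjoint disjP.
rewrite (eq_bigr (fun _ => #|gball e m x|)) => [|i _]; last exact: card_gball_transitive.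
by rewrite sum_nat_const card_ord => <-; apply: max_card.
Qed.

End VertexTransitive.

Fixpoint caret_radius j := if j is j'.+1 then 3 * caret_radius j' + 1 else 0.

Lemma caret_radiusE j : 2 * caret_radius j + 1 = 3 ^ j.
Proof. by elim: j => [//|j IHj]; rewrite /= expnS -IHj; lia. Qed.

Lemma exists_ord_neq n (j : 'I_n.+2) : exists i : 'I_n.+2, i != j.
Proof. by have [->|j0] := eqVneq j ord0; [exists ord_max | exists ord0; rewrite eq_sym]. Qed.

Section Caret.
Variables (T : finType) (e : rel T).
Hypotheses (e_sym : symmetric e) (e_conn : gconnected e) (e_trans : vertex_transitive e).
Variables (r : nat) (v0 : T) (gam : 'I_3 -> nat -> T).
Hypothesis gam_geo : forall i, geodesic_from e v0 r (gam i).
Hypothesis gam_caret : forall (i j : 'I_3) (ki kj : nat), i != j -> ki <= r -> kj <= r ->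
  maxn ki kj <= gdist e (gam i ki) (gam j kj).

Let gam0 i : gam i 0 = v0. Proof. by case: (gam_geo i). Qed.

Lemma card_gball_caret_step j : 3 ^ j <= r ->
  4 * #|gball e (caret_radius j) v0| <= #|gball e (caret_radius j.+1) v0|.
Proof.
move=> Lr; set m := caret_radius j; set L := 3 ^ j.
have L_def : L = 2 * m + 1 by rewrite /L -caret_radiusE.
pose F i := if i is i'.+1 then gball e m (gam (inord i') L) else gball e m v0.
have disjF a b : a < b < 4 -> [disjoint F a & F b].
  case: b => [|b]; first by rewrite ltn0.
  move=> /andP[ab b4]; case: a ab => [|a] ab /=; apply: disjoint_gball => //.
    have [i ib] := exists_ord_neq (inord b : 'I_3).
    by have := gam_caret ib (leq0n r) Lr; rewrite gam0 max0n -/L L_def addn1.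
  have ab' : (inord a : 'I_3) != inord b by rewrite -val_eqE /= !inordK //; lia.
  by have := gam_caret ab' Lr Lr; rewrite maxnn -/L L_def addn1.
have := card_bigcup_disjoint disjF.
rewrite (eq_bigr (fun _ => #|gball e m v0|)) => [|[[|i] ?] _ //]; last first.
  exact: card_gball_transitive.
rewrite sum_nat_const card_ord => <-.
apply/subset_leq_card/bigcupsP => -[[|i] lt_i] _; apply/subsetP => z /=.
  by apply: gball_mono; rewrite /= /m; lia.
have [_ walk _] := gam_geo (inord i).
move=> z_in; have := gball_trans (walk_gball walk Lr) z_in.
by rewrite gam0 /= -/m -/L L_def; apply: gball_mono; lia.
Qed.

Lemma card_gball_caret k : (forall j, j < k -> 3 ^ j <= r) ->
  4 ^ k <= #|gball e (caret_radius k) v0|.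
Proof.
elim: k => [|k IHk] small; first by rewrite cards1.
apply: leq_trans (card_gball_caret_step (small k (ltnSn k))).
by rewrite expnS leq_mul2l IHk // => j jk; apply/small/ltnW.
Qed.

End Caret.

Lemma caret3_card_lower (T : finType) (e : rel T) r k :
  symmetric e -> gconnected e -> vertex_transitive e -> caret3 e r ->
  (forall j, j < k -> 3 ^ j <= r) -> (diam e %/ 3 ^ k).+1 * 4 ^ k <= #|T|.
Proof.
move=> e_sym e_conn e_trans [v0 [gam [gam_geo gam_caret]]] small.
have T0 : 0 < #|T| by apply/card_gt0P; exists v0.
have [x Dx] := bigop.eq_bigmax (fun x => \max_(y : T) gdist e x y) T0.
have [y Dy] := bigop.eq_bigmax (fun y => gdist e x y) T0.
rewrite /diam Dx Dy.
have := card_gball_packing e_trans e_sym e_conn (caret_radius k) x y.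
rewrite caret_radiusE (card_gball_transitive e_trans _ x v0); apply: leq_trans.
by rewrite leq_mul2l (card_gball_caret e_sym e_conn e_trans gam_geo gam_caret small) orbT.
Qed.

Lemma caret3_card_gt (T : finType) (e : rel T) r :
  symmetric e -> gconnected e -> vertex_transitive e -> caret3 e r -> 0 < r ->
  diam e * 4 ^ (trunc_log 3 r).+1 < #|T| * 3 ^ (trunc_log 3 r).+1.
Proof.
move=> e_sym e_conn e_trans caret r_gt0; set k := (trunc_log 3 r).+1.
have small j : j < k -> 3 ^ j <= r.
  by move=> jk; apply: leq_trans (trunc_logP _ r_gt0) => //; rewrite leq_exp2l.
apply: (@leq_trans ((diam e %/ 3 ^ k).+1 * 3 ^ k * 4 ^ k)).
  by rewrite ltn_pmul2r ?expn_gt0 // ltn_ceil // expn_gt0.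
by rewrite mulnAC leq_mul2r (caret3_card_lower e_sym e_conn e_trans caret small) orbT.
Qed.

Local Open Scope ring_scope.

Section RealBounds.
Variable R : realType.

Let a : R := ln 4 / ln 3 - 1.

Lemma log34_sub1_gt0 : 0 < a.
Proof.
have ln3 : 0 < ln (3 : R) by rewrite ln_gt0 // ltr1n.
by rewrite /a subr_gt0 ltr_pdivlMr // mul1r ltr_ln ?posrE ?ltr0n // ltr_nat.
Qed.

Lemma powR3_log34_sub1 : (3 : R) `^ a = 4 / 3.
Proof.
have ln3 : ln (3 : R) != 0 by rewrite gt_eqF // ln_gt0 // ltr1n.
rewrite powRB ?pnatr_eq0 ?implybT // powRr1 ?ler0n //; congr (_ / _).
by rewrite /powR pnatr_eq0 divfK // lnK // posrE ltr0n.
Qed.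

Lemma powR_log34_sub1_le (r k : nat) : (r < 3 ^ k)%N -> r%:R `^ a <= (4 / 3) ^+ k.
Proof.
move=> rk; apply: (@le_trans _ _ ((3 ^ k)%N%:R `^ a)).
  by apply: ge0_ler_powR; rewrite ?nnegrE ?ler0n ?ler_nat ?(ltnW rk) ?(ltW log34_sub1_gt0).
rewrite natrX -powR_mulrn ?ler0n // -powRrM mulrC powRrM powR3_log34_sub1.
by rewrite powR_mulrn // divr_ge0.
Qed.

Lemma caret_powR_split (eps c : R) (D r : nat) : (0 < D)%N -> 0 <= eps ->
  r%:R = eps * D%:R `^ c ->
  eps `^ a * D%:R `^ (1 + c * a) = D%:R * r%:R `^ a.
Proof.
move=> D_gt0 eps_ge0 r_def.
have D_neq0 : D%:R != 0 :> R by rewrite pnatr_eq0 -lt0n.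
rewrite (powRD (x := D%:R)) ?D_neq0 ?implybT // powRr1 ?ler0n // powRrM r_def.
by rewrite powRM ?powR_ge0 // mulrCA.
Qed.

End RealBounds.

Unset Implicit Arguments.

Theorem lemma4p2p1 (R : realType) (T : finType) (e : rel T) (eps c : R) (r : nat) :
  symmetric e -> irreflexive e -> gconnected e -> vertex_transitive e ->
  0 < eps -> 0 < c ->
  r%:R = eps * (diam e)%:R `^ c ->
  caret3 e r ->
  ((1 / 2) * eps `^ (ln 4 / ln 3 - 1)) * (diam e)%:R `^ (1 + c * (ln 4 / ln 3 - 1))
    < #|T|%:R.
Proof.
move=> e_sym _ e_conn e_trans eps_gt0 c_gt0 r_def caret.
have a_gt0 := @log34_sub1_gt0 R.
have [->|D_gt0] := posnP (diam e).
  have T_gt0 : (0 < #|T|)%N by case: caret => v0 _; apply/card_gt0P; exists v0.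
  by rewrite powR0 ?mulr0 ?ltr0n // gt_eqF // addr_gt0 ?mulr_gt0.
rewrite -mulrA (caret_powR_split D_gt0 (ltW eps_gt0) r_def).
have r_gt0 : (0 < r)%N by rewrite -(ltr0n R) r_def mulr_gt0 ?powR_gt0 ?ltr0n.
set k := (trunc_log 3 r).+1.
have packed : (diam e)%:R * (4 / 3) ^+ k < #|T|%:R :> R.
  rewrite expr_div_n mulrA ltr_pdivrMr ?exprn_gt0 ?ltr0n // -!natrX -!natrM ltr_nat.
  exact: caret3_card_gt.
apply: le_lt_trans packed; apply: le_trans (ler_piMl _ _) _.
- by rewrite mulr_ge0 ?powR_ge0.
- by rewrite ler_pdivrMr ?ltr0n // mul1r ler1n.
- by rewrite ler_wpM2l // powR_log34_sub1_le // trunc_log_ltn.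
Qed.
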